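(* Let $\rho_{A^nB^n}$ be a positive semidefinite operator on $(\mathbb{C}^{d_Ad_B})^{\otimes n}$ that is permutation-invariant and IID-block-diagonal with respect to orthogonal projections $\{\Pi_i\}_{i=1}^k$ on $\mathbb{C}^{d_Ad_B}$ of ranks $\{d_i\}_{i=1}^k$. Then there exists a purification $|\Psi\rangle\in(\mathbb{C}^{d_Ad_B}\otimes\mathbb{C}^{d_Ad_B})^{\otimes n}$ of $\rho_{A^nB^n}$ supported on $\mathrm{Sym}^n\big(\bigoplus_{i=1}^k\mathbb{C}^{d_i}\otimes\mathbb{C}^{d_i}\big)$, where $\bigoplus_{i=1}^k\mathbb{C}^{d_i}\otimes\mathbb{C}^{d_i}$ denotes the subspace $\bigoplus_{i=1}^k\mathrm{range}(\Pi_i)\otimes\mathrm{range}(\overline{\Pi_i})$ of $\mathbb{C}^{d_Ad_B}\otimes\mathbb{C}^{d_Ad_B}$ (complex conjugation taken in a fixed basis).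
   Context: An operator $\rho$ on $(\mathbb{C}^{d_Ad_B})^{\otimes n}$ is permutation-invariant if $P_\pi\rho P_\pi^\dagger=\rho$ for all $\pi\in S_n$, with $P_\pi$ the unitary permuting the $n$ tensor factors. Given orthogonal projections $\{\Pi_i\}_{i=1}^k$ on $\mathbb{C}^{d_Ad_B}$, $\rho$ is IID-block-diagonal if $\rho=\sum_{\vec{j}\in[k]^n}\Pi_{\vec{j}}\rho\Pi_{\vec{j}}$ where $\Pi_{\vec j}=\Pi_{j_1}\otimes\cdots\otimes\Pi_{j_n}$. $\mathrm{Sym}^n(V)$ is the symmetric subspace of $V^{\otimes n}$, with $V^{\otimes n}$ viewed inside $(\mathbb{C}^{d_Ad_B}\otimes\mathbb{C}^{d_Ad_B})^{\otimes n}$; the purification is with respect to the second factor of each pair (i.e. tracing out the $n$ purifying copies of $\mathbb{C}^{d_Ad_B}$ gives $\rho$). *)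

(* Scalars: an arbitrary numeric closed field C (e.g. the
   complex numbers); conjugation is conjC. *)
From mathcomp Require Import all_boot all_order all_algebra.
From mathcomp Require Import perm.
From mathcomp Require Import sesquilinear spectral.
Set Implicit Arguments. Unset Strict Implicit. Unset Printing Implicit Defensive.
Import Order.TTheory GRing.Theory Num.Theory.
Local Open Scope ring_scope.

Section Defs.
Variable C : numClosedFieldType.

(* Basis index of (C^D)^{\otimes n}: a word x : 'I_n -> 'I_D. *)
Definition word (D n : nat) := {ffun 'I_n -> 'I_D}.
(* Basis index of (C^D \otimes C^D)^{\otimes n}: each tensor factor is a pair
   (system index, purifying index). *)
Definition pword (D n : nat) := {ffun 'I_n -> 'I_D * 'I_D}.

(* An operator on a space with basis X is given by its matrix entries. *)
Definition psd (X : finType) (rho : X -> X -> C) : Prop :=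
  forall v : X -> C, 0 <= \sum_(x : X) \sum_(y : X) (v x)^* * rho x y * v y.

(* Permutation of tensor factors: (P_pi) acting on basis words. *)
Definition permw (T : Type) (n : nat) (s : 'S_n) (x : {ffun 'I_n -> T}) :
  {ffun 'I_n -> T} := [ffun i => x (s i)].

(* P_pi rho P_pi^dagger = rho for all pi, written entrywise. *)
Definition perm_invariant (D n : nat) (rho : word D n -> word D n -> C) : Prop :=
  forall (s : 'S_n) (x y : word D n), rho (permw s x) (permw s y) = rho x y.

Definition orth_proj (D : nat) (P : 'M[C]_D) : Prop :=
  P *m P = P /\ map_mx (fun z : C => z^*) (P ^T) = P .

(* Pi_j = Pi_{j_1} \otimes ... \otimes Pi_{j_n}, entrywise. *)
Definition tens_proj (D n k : nat) (Pi : 'I_k -> 'M[C]_D) (j : {ffun 'I_n -> 'I_k})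
  (x y : word D n) : C := \prod_(i < n) Pi (j i) (x i) (y i).

(* rho = sum_{j in [k]^n} Pi_j rho Pi_j *)
Definition iid_block_diag (D n k : nat) (Pi : 'I_k -> 'M[C]_D)
  (rho : word D n -> word D n -> C) : Prop :=
  forall x y : word D n,
    rho x y = \sum_(j : {ffun 'I_n -> 'I_k}) \sum_(z : word D n) \sum_(w : word D n)
                 tens_proj Pi j x z * rho z w * tens_proj Pi j w y.

Definition pairw (D n : nat) (x u : word D n) : pword D n := [ffun i => (x i, u i)].

(* Psi purifies rho: tracing out the second factor of each pair of |Psi><Psi|
   gives rho. *)
Definition purifies (D n : nat) (Psi : pword D n -> C) (rho : word D n -> word D n -> C)
  : Prop :=
  forall x y : word D n,
    rho x y = \sum_(u : word D n) Psi (pairw x u) * (Psi (pairw y u))^*.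

Definition in_span (X : Type) (S : (X -> C) -> Prop) (v : X -> C) : Prop :=
  exists (m : nat) (c : 'I_m -> C) (f : 'I_m -> X -> C),
    (forall l, S (f l)) /\ forall x, v x = \sum_(l < m) c l * f l x.

Definition in_range (D : nat) (P : 'M[C]_D) (v : 'I_D -> C) : Prop :=
  exists w : 'I_D -> C, forall a, v a = \sum_(b < D) P a b * w b.

Definition tens2 (D : nat) (u v : 'I_D -> C) : 'I_D * 'I_D -> C :=
  fun p => u p.1 * v p.2.

(* V = (+)_i range(Pi_i) \otimes range(conj Pi_i) inside C^D \otimes C^D:
   the span of all u \otimes v with u in range Pi_i, v in range (conj Pi_i). *)
Definition in_V (D k : nat) (Pi : 'I_k -> 'M[C]_D) (w : 'I_D * 'I_D -> C) : Prop :=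
  in_span (fun t => exists (i : 'I_k) (u v : 'I_D -> C),
             in_range (Pi i) u /\ in_range (map_mx (fun z : C => z^*) (Pi i)) v /\ t = tens2 u v) w.

Definition tensn (D n : nat) (f : 'I_n -> 'I_D * 'I_D -> C) : pword D n -> C :=
  fun a => \prod_(i < n) f i (a i).

Definition in_tensor_power (D n k : nat) (Pi : 'I_k -> 'M[C]_D) (Psi : pword D n -> C)
  : Prop :=
  in_span (fun t => exists f : 'I_n -> 'I_D * 'I_D -> C,
             (forall i, in_V Pi (f i)) /\ t = tensn f) Psi.

Definition in_Sym (D n k : nat) (Pi : 'I_k -> 'M[C]_D) (Psi : pword D n -> C) : Prop :=
  in_tensor_power Pi Psi /\ forall (s : 'S_n) (a : pword D n), Psi (permw s a) = Psi a.

End Defs.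

(* Encode rho as a psd matrix R indexed by words and let S be its positive square
   root.  S commutes with everything that commutes with R, in particular with the
   permutations of the tensor factors.  It is also IID-block-diagonal: for psd R,
   R = sum_j Pi_j R Pi_j forces Pi_j R = R Pi_j, so (sum_j Pi_j - 1) R = 0, hence
   (sum_j Pi_j - 1) S = 0 and S = sum_j Pi_j S Pi_j.  The vectorization
   Psi(x, u) := S(x, u) purifies rho because S S^* = R, is symmetric because S is
   permutation invariant, and the block form of S expands Psi over products of
   vectors of range(Pi_i) (x) range(conj Pi_i). *)

From mathcomp Require Import all_boot all_order all_algebra.
From mathcomp Require Import perm.
From mathcomp Require Import sesquilinear spectral.
Import Order.TTheory GRing.Theory Num.Theory.
Set Implicit Arguments. Unset Strict Implicit. Unset Printing Implicit Defensive.
Local Open Scope ring_scope.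
Local Open Scope sesquilinear_scope.

Section Adjoint.
Variable C : numClosedFieldType.

Lemma mulmx_trC_eq0 m n (A : 'M[C]_(m, n)) : A *m A^t* = 0 -> A = 0.
Proof.
move=> /matrixP AA0; apply/matrixP => i j; rewrite mxE.
have /psumr_eq0P Aij : \sum_l A i l * (A i l)^* = 0.
  transitivity ((A *m A^t*) i i); last by rewrite AA0 mxE.
  by rewrite mxE; apply: eq_bigr => l _; rewrite !mxE.
by apply/eqP; rewrite -mul_conjC_eq0 Aij // => l _; rewrite mul_conjC_ge0.
Qed.

Lemma herm_mulmx_sqr_eq0 m n (T : 'M[C]_(m, n)) (S : 'M[C]_n) :
  S^t* = S -> T *m (S *m S) = 0 -> T *m S = 0.
Proof.
move=> S_herm TSS0; apply: mulmx_trC_eq0.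
by rewrite trmx_mul map_mxM S_herm mulmxA -(mulmxA T) TSS0 mul0mx.
Qed.

Lemma diag_mx_comm_map n (K : 'M[C]_n) (d : 'rV[C]_n) (f : C -> C) :
  K *m diag_mx d = diag_mx d *m K ->
  K *m diag_mx (map_mx f d) = diag_mx (map_mx f d) *m K.
Proof.
rewrite mul_mx_diag mul_diag_mx mul_mx_diag mul_diag_mx.
move=> /matrixP Kd; apply/matrixP => a b; have := Kd a b; rewrite !mxE.
have [Kab0|Kab_neq0] := eqVneq (K a b) 0; first by rewrite Kab0 !mul0r !mulr0.
by rewrite [_ * d 0 b]mulrC => /(mulIf Kab_neq0) ->; rewrite mulrC.
Qed.

Lemma mulmx_unitary_conj n (P A B : 'M[C]_n) : P \is unitarymx ->
  (P^t* *m A *m P) *m (P^t* *m B *m P) = P^t* *m (A *m B) *m P.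
Proof. by move=> P_unitary; rewrite !mulmxA mulmxtVK. Qed.

Lemma unitary_conjK n (P A : 'M[C]_n) : P \is unitarymx ->
  P *m (P^t* *m A *m P) *m P^t* = A.
Proof.
by move=> P_unitary; rewrite !mulmxA (unitarymxP P_unitary) mul1mx mulmxtVK.
Qed.

End Adjoint.

Section HermitianForm.
Variables (C : numClosedFieldType) (N : nat).
Implicit Types (M K : 'M[C]_N) (u v : 'cV[C]_N).

Definition hform M u v : C := (u^t* *m M *m v) 0 0.

Definition psdmx M := forall v, 0 <= hform M v v.

Lemma hformDl M u1 u2 v : hform M (u1 + u2) v = hform M u1 v + hform M u2 v.
Proof. by rewrite /hform linearD /= map_mxD !mulmxDl mxE. Qed.

Lemma hformDr M u v1 v2 : hform M u (v1 + v2) = hform M u v1 + hform M u v2.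
Proof. by rewrite /hform mulmxDr mxE. Qed.

Lemma hformZl M t u v : hform M (t *: u) v = t^* * hform M u v.
Proof. by rewrite /hform linearZ /= map_mxZ -!scalemxAl mxE. Qed.

Lemma hformZr M t u v : hform M u (t *: v) = t * hform M u v.
Proof. by rewrite /hform -scalemxAr mxE. Qed.

Lemma hformBM M K u v : hform (M - K) u v = hform M u v - hform K u v.
Proof. by rewrite /hform mulmxBr mulmxBl mxE [X in _ + X]mxE. Qed.

Lemma hform_sumM (I : finType) (P : pred I) (F : I -> 'M[C]_N) u v :
  hform (\sum_(i | P i) F i) u v = \sum_(i | P i) hform (F i) u v.
Proof. by rewrite /hform mulmx_sumr mulmx_suml summxE. Qed.

Lemma hform_trC M u v : hform (M^t*) u v = (hform M v u)^*.
Proof.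
rewrite /hform.
have -> : u^t* *m M^t* *m v = (v^t* *m M *m u)^t*.
  by rewrite !trmx_mul !map_mxM trmxCK mulmxA.
by rewrite !mxE.
Qed.

Lemma hform_delta M a b : hform M (delta_mx a 0) (delta_mx b 0) = M a b.
Proof.
by rewrite /hform trmx_delta map_delta_mx -rowE -colE !mxE.
Qed.

Lemma hformE M v : hform M v v = \sum_i \sum_j (v i 0)^* * M i j * v j 0.
Proof.
rewrite /hform mxE exchange_big /=; apply: eq_bigr => j _.
by rewrite mxE mulr_suml; apply: eq_bigr => i _; rewrite !mxE.
Qed.

Lemma hform_eq0 K : (forall v, hform K v v = 0) -> K = 0.
Proof.
move=> K0; apply/matrixP => a b; rewrite mxE.
(* Polarization: test the form on e_a + t e_b for t = 1 and t = 'i. *)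
pose e i : 'cV[C]_N := delta_mx i 0.
have Kt t : t * K a b + t^* * K b a = 0.
  have := K0 (e a + t *: e b).
  rewrite !(hformDl, hformDr, hformZl, hformZr) !hform_delta.
  have := K0 (e a); have := K0 (e b); rewrite !hform_delta => -> ->.
  by rewrite !mulr0 addr0 add0r.
have := Kt 1; have := Kt 'i; rewrite conjCi conjC1 !mul1r mulNr.
move=> /eqP; rewrite -mulrBr mulf_eq0 (negbTE (neq0Ci C)) subr_eq0 /= => /eqP ->.
by rewrite -mulr2n -mulr_natl => /eqP; rewrite mulf_eq0 pnatr_eq0 => /eqP.
Qed.

Lemma psdmx_herm M : psdmx M -> M^t* = M.
Proof.
move=> M_psd; apply/eqP; rewrite -subr_eq0; apply/eqP/hform_eq0 => v.
by rewrite hformBM hform_trC geC0_conj ?subrr.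
Qed.

Lemma hform_mulmx M (A : 'M[C]_N) u v :
  hform M (A *m u) (A *m v) = hform (A^t* *m M *m A) u v.
Proof. by rewrite /hform trmx_mul map_mxM !mulmxA. Qed.

Lemma psdmx_sqrt M : psdmx M -> exists S : 'M[C]_N,
  [/\ S^t* = S, S *m S = M & forall K, K *m M = M *m K -> K *m S = S *m K].
Proof.
move=> M_psd; have M_herm := psdmx_herm M_psd.
have /orthomx_spectralP : M \is normalmx by apply/normalmxP; rewrite M_herm.
set P := spectralmx M; set d := spectral_diag M.
have P_unitary : P \is unitarymx := spectral_unitarymx M.
rewrite invmx_unitary // => ME.
have d_ge0 i : 0 <= d 0 i.
  have := M_psd (P^t* *m delta_mx i 0).
  by rewrite hform_mulmx trmxCK ME unitary_conjK // hform_delta mxE eqxx mulr1n.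
pose s := map_mx sqrtC d.
exists (P^t* *m diag_mx s *m P); split.
- rewrite !trmx_mul !map_mxM trmxCK tr_diag_mx map_diag_mx mulmxA.
  congr (_ *m diag_mx _ *m _); apply/rowP => i; rewrite !mxE.
  by apply: geC0_conj; rewrite sqrtC_ge0.
- rewrite mulmx_unitary_conj // mulmx_diag ME; congr (_ *m diag_mx _ *m _).
  by apply/rowP => i; rewrite !mxE -expr2 sqrtCK.
- move=> K KM; pose K' := P *m K *m P^t*.
  have Pt_unitary : P^t* \is unitarymx by rewrite trmxC_unitary.
  have KE : K = P^t* *m K' *m P.
    by have := unitary_conjK K Pt_unitary; rewrite trmxCK.
  have conjP A B : (P *m A *m P^t*) *m (P *m B *m P^t*) = P *m (A *m B) *m P^t*.
    by have := mulmx_unitary_conj A B Pt_unitary; rewrite trmxCK.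
  have K'd : K' *m diag_mx d = diag_mx d *m K'.
    have dE : diag_mx d = P *m M *m P^t* by rewrite ME unitary_conjK.
    by rewrite dE !conjP KM.
  by rewrite KE !mulmx_unitary_conj // diag_mx_comm_map.
Qed.

End HermitianForm.

Section BlockDiagonal.
Variables (C : numClosedFieldType) (N : nat) (J : finType) (Q : J -> 'M[C]_N).
Hypotheses (Q_herm : forall j, (Q j)^t* = Q j)
           (Q_idem : forall j, Q j *m Q j = Q j).

Lemma psdmx_compress_eq0 (A P : 'M[C]_N) :
  psdmx A -> P^t* = P -> P *m A *m P = 0 -> A *m P = 0.
Proof.
move=> A_psd P_herm PAP0; have [S [S_herm SSA _]] := psdmx_sqrt A_psd.
have PS0 : P *m S = 0.
  apply: mulmx_trC_eq0.
  by rewrite trmx_mul map_mxM P_herm S_herm mulmxA -(mulmxA P) SSA.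
have SP0 : S *m P = 0.
  by rewrite -S_herm -P_herm -map_mxM -trmx_mul PS0 trmx0 map_mx0.
by rewrite -SSA -mulmxA SP0 mulmx0.
Qed.

Lemma psdmx_block_comm (R : 'M[C]_N) : psdmx R ->
  R = \sum_j Q j *m R *m Q j -> forall j, Q j *m R = R *m Q j.
Proof.
move=> R_psd RE j.
pose R' := \sum_(i | i != j) Q i *m R *m Q i.
have R'E : R' = R - Q j *m R *m Q j.
  by apply/eqP; rewrite eq_sym subr_eq addrC {1}RE (bigD1 j).
have R'_psd : psdmx R'.
  move=> v; rewrite hform_sumM; apply: sumr_ge0 => i _.
  by rewrite -{1}(Q_herm i) -hform_mulmx.
have R'Q : R' *m Q j = 0.
  apply: psdmx_compress_eq0 => //.
  by rewrite R'E mulmxBr mulmxBl !mulmxA Q_idem -!mulmxA Q_idem subrr.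
have RQ : R *m Q j = Q j *m R *m Q j.
  apply/eqP; rewrite -subr_eq0 -R'Q R'E mulmxBl.
  by rewrite -[_ *m Q j *m Q j]mulmxA Q_idem.
have QR : Q j *m R = Q j *m R *m Q j.
  have := congr1 (fun A => A^t*) RQ.
  by rewrite !trmx_mul !map_mxM Q_herm psdmx_herm // mulmxA.
by rewrite QR RQ.
Qed.

Lemma psdmx_sqrt_block (R S : 'M[C]_N) : psdmx R ->
  R = \sum_j Q j *m R *m Q j -> S^t* = S -> S *m S = R ->
  (forall K, K *m R = R *m K -> K *m S = S *m K) ->
  S = \sum_j Q j *m S *m Q j.
Proof.
move=> R_psd RE S_herm SSR S_comm.
have QR := psdmx_block_comm R_psd RE.
have sumQR : (\sum_j Q j) *m R = R.
  rewrite {2}RE mulmx_suml; apply: eq_bigr => j _.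
  by rewrite -mulmxA -QR mulmxA Q_idem.
have sumQS : (\sum_j Q j) *m S = S.
  apply/eqP; rewrite -subr_eq0 -{2}[S]mul1mx -mulmxBl; apply/eqP.
  by apply: herm_mulmx_sqr_eq0 => //; rewrite SSR mulmxBl sumQR mul1mx subrr.
rewrite -{1}sumQS mulmx_suml; apply: eq_bigr => j _.
by rewrite -mulmxA -(S_comm _ (QR j)) mulmxA Q_idem.
Qed.

End BlockDiagonal.

Lemma perm_mx_commP (R : pzSemiRingType) n (s : 'S_n) (A : 'M[R]_n) :
  perm_mx s *m A = A *m perm_mx s <-> forall i j, A (s i) (s j) = A i j.
Proof.
rewrite -row_permE -[s in A *m perm_mx s]invgK -col_permE.
split=> [/matrixP sA i j | sA]; last first.
  by apply/matrixP => i j; rewrite !mxE -[j in LHS](permKV s) sA.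
by have := sA i (s j); rewrite !mxE permK.
Qed.

(* Operators on C^X are handled as #|X| x #|X| matrices through the enumeration
   of X, so that the spectral theorem for square matrices applies. *)
Section FunMatrix.
Variables (C : numClosedFieldType) (X : finType).
Implicit Types f g : X -> X -> C.

Definition mx_of f : 'M[C]_#|X| := \matrix_(i, j) f (enum_val i) (enum_val j).

Definition fun_of (A : 'M[C]_#|X|) x y := A (enum_rank x) (enum_rank y).

Lemma fun_ofK : cancel fun_of mx_of.
Proof. by move=> A; apply/matrixP => i j; rewrite mxE /fun_of !enum_valK. Qed.

Lemma mx_ofE f i j : mx_of f i j = f (enum_val i) (enum_val j).
Proof. exact: mxE. Qed.

Lemma mx_of_rankE f x y : mx_of f (enum_rank x) (enum_rank y) = f x y.
Proof. by rewrite mx_ofE !enum_rankK. Qed.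

Lemma mx_of_inj f g : mx_of f = mx_of g -> f =2 g.
Proof. by move=> fg x y; rewrite -mx_of_rankE fg mx_of_rankE. Qed.

Lemma eq_mx_of f g : f =2 g -> mx_of f = mx_of g.
Proof. by move=> fg; apply/matrixP => i j; rewrite !mx_ofE fg. Qed.

Lemma sum_enum_val (F : X -> C) : \sum_(i < #|X|) F (enum_val i) = \sum_x F x.
Proof. by rewrite -big_enum_val. Qed.

Lemma mulmx_of f g :
  mx_of f *m mx_of g = mx_of (fun x y => \sum_z f x z * g z y).
Proof.
apply/matrixP => i j; rewrite !mxE -sum_enum_val.
by apply: eq_bigr => l _; rewrite !mxE.
Qed.

Lemma trC_mx_of f : (mx_of f)^t* = mx_of (fun x y => (f y x)^*).
Proof. by apply/matrixP => i j; rewrite !mxE. Qed.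

Lemma sum_mx_of (I : finType) (F : I -> X -> X -> C) :
  \sum_i mx_of (F i) = mx_of (fun x y => \sum_i F i x y).
Proof.
by apply/matrixP => i j; rewrite summxE !mxE; apply: eq_bigr => l _; rewrite mxE.
Qed.

Lemma psd_mx_of f : psd f -> psdmx (mx_of f).
Proof.
move=> f_psd v; rewrite hformE.
have := f_psd (fun x => v (enum_rank x) 0).
rewrite -sum_enum_val; under eq_bigr do rewrite -sum_enum_val.
by under eq_bigr do under eq_bigr do rewrite !enum_valK -mx_ofE.
Qed.

Definition rank_perm (s : {perm X}) : 'S_#|X| :=
  perm (inj_comp (@enum_rank_inj X)
          (inj_comp (@perm_inj _ s) (@enum_val_inj _ X))).

Lemma perm_mx_of_commP (s : {perm X}) f :
  perm_mx (rank_perm s) *m mx_of f = mx_of f *m perm_mx (rank_perm s) <->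
  forall x y, f (s x) (s y) = f x y.
Proof.
apply: (iff_trans (perm_mx_commP _ _)); split=> [sf x y | sf i j].
  have := sf (enum_rank x) (enum_rank y).
  by rewrite !permE /= !enum_rankK !mx_of_rankE.
by rewrite !permE /= !mx_ofE !enum_rankK sf.
Qed.

End FunMatrix.

Lemma permwK (T : Type) n (s : 'S_n) : cancel (@permw T n s) (permw s^-1).
Proof. by move=> x; apply/ffunP => i; rewrite !ffunE permKV. Qed.

Definition permw_perm (T : finType) n (s : 'S_n) : {perm {ffun 'I_n -> T}} :=
  perm (can_inj (permwK s)).

Section Vectorization.
Variables (C : numClosedFieldType) (D n : nat).
Implicit Types f : word D n -> word D n -> C.

Definition vecw f (a : pword D n) : C :=
  f [ffun i => (a i).1] [ffun i => (a i).2].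

Lemma vecw_pairw f x u : vecw f (pairw x u) = f x u.
Proof. by congr f; apply/ffunP => i; rewrite !ffunE. Qed.

Lemma perm_invariant_mxP f : perm_invariant f <->
  forall s, perm_mx (rank_perm (permw_perm 'I_D s)) *m mx_of f =
            mx_of f *m perm_mx (rank_perm (permw_perm 'I_D s)).
Proof.
split=> [f_inv s | f_comm s x y].
  by apply/perm_mx_of_commP => x y; rewrite !permE.
by have /perm_mx_of_commP/(_ x y) := f_comm s; rewrite !permE.
Qed.

Lemma vecw_perm_invariant f s a :
  perm_invariant f -> vecw f (permw s a) = vecw f a.
Proof.
move=> f_inv; rewrite /vecw -[RHS](f_inv s).
by congr f; apply/ffunP => i; rewrite !ffunE.
Qed.

End Vectorization.

Lemma in_span_sum (C : numClosedFieldType) (Y : Type) (I : finType)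
    (S : (Y -> C) -> Prop) (c : I -> C) (f : I -> Y -> C) (v : Y -> C) :
  (forall i, S (f i)) -> (forall y, v y = \sum_i c i * f i y) -> in_span S v.
Proof.
move=> Sf vE; exists #|I|, (c \o enum_val), (f \o enum_val).
by split=> [l|y]; [exact: Sf | rewrite vE big_enum_val].
Qed.

Lemma in_range_col (C : numClosedFieldType) D (P : 'M[C]_D) b (v : 'I_D -> C) :
  (forall a, v a = P a b) -> in_range P v.
Proof.
move=> vE; exists (fun c => (delta_mx b 0 : 'cV[C]_D) c 0) => a.
rewrite vE; transitivity ((P *m (delta_mx b 0 : 'cV[C]_D)) a 0).
  by rewrite -colE mxE.
by rewrite mxE.
Qed.

Section Projections.
Variables (C : numClosedFieldType) (D n k : nat) (Pi : 'I_k -> 'M[C]_D).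
Hypothesis Pi_proj : forall i, orth_proj (Pi i).

Lemma orth_proj_conj i a b : (Pi i b a)^* = Pi i a b.
Proof. by have /matrixP/(_ a b) := (Pi_proj i).2; rewrite !mxE. Qed.

Lemma orth_proj_idem i a b : \sum_c Pi i a c * Pi i c b = Pi i a b.
Proof. by have /matrixP/(_ a b) := (Pi_proj i).1; rewrite !mxE. Qed.

Lemma tens_proj_conj j (x y : word D n) :
  (tens_proj Pi j y x)^* = tens_proj Pi j x y.
Proof.
by rewrite /tens_proj rmorph_prod; apply: eq_bigr => i _; exact: orth_proj_conj.
Qed.

Lemma tens_proj_idem j (x y : word D n) :
  \sum_z tens_proj Pi j x z * tens_proj Pi j z y = tens_proj Pi j x y.
Proof.
rewrite /tens_proj; under eq_bigr do rewrite -big_split /=.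
rewrite -(bigA_distr_bigA (fun i c => Pi (j i) (x i) c * Pi (j i) c (y i))) /=.
by apply: eq_bigr => i _; rewrite orth_proj_idem.
Qed.

Definition tens_projmx j : 'M[C]_#|word D n| := mx_of (tens_proj Pi j).

Lemma tens_projmx_herm j : (tens_projmx j)^t* = tens_projmx j.
Proof.
by rewrite trC_mx_of; apply: eq_mx_of => x y; rewrite tens_proj_conj.
Qed.

Lemma tens_projmx_idem j : tens_projmx j *m tens_projmx j = tens_projmx j.
Proof. by rewrite mulmx_of; apply: eq_mx_of => x y; rewrite tens_proj_idem. Qed.

Lemma iid_block_diag_mxP (f : word D n -> word D n -> C) :
  iid_block_diag Pi f <->
  mx_of f = \sum_j tens_projmx j *m mx_of f *m tens_projmx j.
Proof.
have -> : \sum_j tens_projmx j *m mx_of f *m tens_projmx j =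
    mx_of (fun x y => \sum_j \sum_z \sum_w
             tens_proj Pi j x z * f z w * tens_proj Pi j w y).
  rewrite /tens_projmx; under eq_bigr do rewrite !mulmx_of.
  rewrite sum_mx_of; apply: eq_mx_of => x y; apply: eq_bigr => j _.
  by rewrite exchange_big; apply: eq_bigr => w _; rewrite mulr_suml.
split=> [f_iid | /mx_of_inj //]; exact: eq_mx_of.
Qed.

Lemma in_V_proj_pair i z w : in_V Pi (fun p => Pi i p.1 z * Pi i w p.2).
Proof.
exists 1%N, (fun _ => 1),
  (fun _ => tens2 (fun a => Pi i a z) (fun b => Pi i w b)).
split=> [_ | p]; last by rewrite big_ord1 mul1r.
exists i, (fun a => Pi i a z), (fun b => Pi i w b); split.
  exact: in_range_col.
split=> //; apply: (@in_range_col _ _ _ w) => b.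
by rewrite mxE orth_proj_conj.
Qed.

Lemma iid_block_diag_tensor_power (f : word D n -> word D n -> C) :
  iid_block_diag Pi f -> in_tensor_power Pi (vecw f).
Proof.
move=> f_iid.
pose g (t : {ffun 'I_n -> 'I_k} * word D n * word D n) :=
  tensn (fun i p => Pi (t.1.1 i) p.1 (t.1.2 i) * Pi (t.1.1 i) (t.2 i) p.2).
apply: (in_span_sum (c := fun t => f t.1.2 t.2) (f := g)).
  move=> [[j z] w]; exists (fun i p => Pi (j i) p.1 (z i) * Pi (j i) (w i) p.2).
  by split=> // i; apply: in_V_proj_pair.
move=> a; rewrite /vecw f_iid pair_bigA pair_bigA /=.
apply: eq_bigr => -[[j z] w] _.
rewrite /g /tensn /tens_proj big_split /=.
rewrite mulrAC mulrC; congr (_ * (_ * _)).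
all: by apply: eq_bigr => i _; rewrite ffunE.
Qed.

End Projections.

Theorem lemma1 (C : numClosedFieldType) (dA dB n k : nat)
  (Pi : 'I_k -> 'M[C]_(dA * dB))
  (rho : word (dA * dB) n -> word (dA * dB) n -> C) :
  (forall i, orth_proj (Pi i)) ->
  psd rho ->
  perm_invariant rho ->
  iid_block_diag Pi rho ->
  exists Psi : pword (dA * dB) n -> C, purifies Psi rho /\ in_Sym Pi Psi.
Proof.
move=> Pi_proj rho_psd rho_inv rho_iid.
have R_psd := psd_mx_of rho_psd.
have [S [S_herm SSR S_comm]] := psdmx_sqrt R_psd.
have SE : mx_of (fun_of S) = S := fun_ofK S.
exists (vecw (fun_of S)); split; [|split].
- have : mx_of rho = mx_of (fun x y => \sum_u fun_of S x u * (fun_of S y u)^*).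
    rewrite -(mulmx_of (fun_of S) (fun u y => (fun_of S y u)^*)) -trC_mx_of.
    by rewrite SE S_herm SSR.
  move=> /mx_of_inj rhoE x y; rewrite rhoE.
  by apply: eq_bigr => u _; rewrite !vecw_pairw.
- apply: iid_block_diag_tensor_power => //; apply/iid_block_diag_mxP.
  rewrite SE; apply: psdmx_sqrt_block R_psd _ S_herm SSR S_comm.
  - exact: tens_projmx_herm.
  - exact: tens_projmx_idem.
  - exact/iid_block_diag_mxP.
- move=> s a; apply: vecw_perm_invariant; apply/perm_invariant_mxP => s'.
  by rewrite SE; apply: S_comm; apply: (perm_invariant_mxP rho).1.
Qed.
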